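(* Let $T\in B(\mathcal{F})$ be a block-diagonal operator satisfying \[\sum_{n=1}^\infty\|T|_{\mathcal{F}_{n+1}}-(T|_{\mathcal{F}_n})\otimes I\|<\infty,\] where $(T|_{\mathcal{F}_n})\otimes I$ acts on $\mathcal{F}_{n+1}=\mathcal{F}_n\otimes\mathbb{C}^d$. Then $T\in\mathcal{C}=C^*(L_1,\ldots,L_d)$.
   Context: $d\ge2$; $\xi_1,\ldots,\xi_d$ is the standard orthonormal basis of $\mathbb{C}^d$. $\mathcal{F}=\bigoplus_{n\ge0}\mathcal{F}_n$ is the full Fock space, $\mathcal{F}_0=\mathbb{C}\Omega$, $\mathcal{F}_n=(\mathbb{C}^d)^{\otimes n}$ with the usual inner product. $L_j\eta=\xi_j\otimes\eta$ (and $L_j\Omega=\xi_j$) are the left creation operators. $T$ is block-diagonal if $T(\mathcal{F}_n)\subseteq\mathcal{F}_n$ for all $n$. *)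

(* The full Fock space over C^d is modelled by its
   orthonormal basis indexed by words (seq 'I_d): the word [:: j1; ...; jn]
   stands for xi_j1 (x) ... (x) xi_jn, the empty word for Omega.
   An operator is given by its matrix  A u w = <e_u, A e_w>. *)
From HB Require Import structures.
From mathcomp Require Import all_boot all_order all_algebra.
From mathcomp Require Import complex.
From mathcomp Require Import reals.
Set Implicit Arguments. Unset Strict Implicit. Unset Printing Implicit Defensive.
Import Order.TTheory GRing.Theory Num.Theory.
Local Open Scope ring_scope.

Definition word (d : nat) := seq 'I_d.

Definition fock_op (R : realType) (d : nat) := word d -> word d -> R[i].

Definition normsq (R : realType) (z : R[i]) : R :=
  (complex.Re z) ^+ 2 + (complex.Im z) ^+ 2.

(* Since finitely
   supported vectors are dense and the P_s converge strongly to I, this is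
   exactly "A is bounded with operator norm at most c". *)
Definition opnorm_le (R : realType) (d : nat) (A : fock_op R d) (c : R) : Prop :=
  0 <= c /\
  forall (s : seq (word d)) (x : word d -> R[i]), uniq s ->
    \sum_(u <- s) normsq (\sum_(w <- s) A u w * x w)
      <= c ^+ 2 * \sum_(w <- s) normsq (x w).

Definition bounded_op (R : realType) (d : nat) (A : fock_op R d) : Prop :=
  exists c : R, opnorm_le A c.

Definition block_diagonal (R : realType) (d : nat) (T : fock_op R d) : Prop :=
  forall u w : word d, size u != size w -> T u w = 0.

(* T|_{F_{n+1}} - (T|_{F_n}) (x) I, viewed as an operator on F (zero off
   F_{n+1}); F_{n+1} = F_n (x) C^d, the last letter being the C^d factor. *)
Definition tensor_defect (R : realType) (d : nat) (T : fock_op R d) (n : nat)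
  : fock_op R d :=
  fun u w =>
    if (size u == n.+1) && (size w == n.+1) then
      T u w - T (take n u) (take n w) * (drop n u == drop n w)%:R
    else 0.

(* Left creation operators and their adjoints, acting on basis vectors:
   a letter (false, j) is L_j, a letter (true, j) is L_j^*. *)
Definition letter_act (d : nat) (x : bool * 'I_d) (w : word d) : option (word d) :=
  if ~~ x.1 then Some (x.2 :: w)
  else match w with
       | i :: w' => if i == x.2 then Some w' else None
       | [::] => None
       end.

(* a *-monomial x_1 x_2 ... x_k in L_1..L_d, L_1^*..L_d^* (the empty one is I);
   it maps a basis vector to a basis vector or to 0 *)
Definition monomial_act (d : nat) (m : seq (bool * 'I_d)) (w : word d)
  : option (word d) :=
  foldr (fun x ow => obind (letter_act x) ow) (Some w) m.

Definition starpoly (R : realType) (d : nat) := seq (R[i] * seq (bool * 'I_d)).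

Definition starpoly_op (R : realType) (d : nat) (p : starpoly R d) : fock_op R d :=
  fun u w => \sum_(t <- p) t.1 * (monomial_act t.2 w == Some u)%:R.

Definition in_Cuntz_Toeplitz (R : realType) (d : nat) (T : fock_op R d) : Prop :=
  forall eps : R, 0 < eps ->
    exists p : starpoly R d, opnorm_le (fun u w => T u w - starpoly_op p u w) eps.

(* Write T_n for the block T|_{F_n}.  For any D, the *-polynomial
   \sum_{|a| = |b| = n} D(a, b) L_a L_b^* acts on each F_m, m >= n, as
   D_n (x) I and vanishes below level n; taking differences of two such
   polynomials isolates a single block T_n, so the operator equal to T on
   F_0 + ... + F_(N-1) and to T_N (x) I on every higher level lies in the
   *-algebra generated by the L_j.  On F_m, m >= N, its difference with T is
   the telescoping sum of the amplified defects (T_(k+1) - T_k (x) I) (x) I,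
   N <= k < m; amplification does not increase norms, so this difference has
   norm at most the tail sum_(k >= N) c_k of a convergent series. *)

From HB Require Import structures.
From mathcomp Require Import all_boot all_order all_algebra.
From mathcomp Require Import complex.
From mathcomp Require Import reals.
From mathcomp Require Import classical_sets.
From mathcomp Require Import lra.
Import Order.TTheory GRing.Theory Num.Theory.
Local Open Scope ring_scope.
Set Implicit Arguments. Unset Strict Implicit. Unset Printing Implicit Defensive.

Lemma big_seq_pick (V : nmodType) (I : eqType) (s : seq I) (a : I) (F : I -> V) :
  uniq s -> \sum_(u <- s) (if u == a then F u else 0) = if a \in s then F a else 0.
Proof.
move=> us; case: ifP => [ais|/negbT ans].
  by rewrite (bigD1_seq a) //= eqxx big1 ?addr0 // => u /negPf ->.
by rewrite big1_seq // => u /andP[_ us']; case: eqP us' => // ->; rewrite (negPf ans).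
Qed.

Lemma big_partition (V : nmodType) (I J : eqType) (s : seq I) (g : I -> J) (F : I -> V) :
  \sum_(u <- s) F u = \sum_(v <- undup (map g s)) \sum_(u <- s | g u == v) F u.
Proof.
under [RHS]eq_bigr do rewrite big_mkcond.
rewrite exchange_big /=; apply: eq_big_seq => u us.
under eq_bigr do rewrite (eq_sym (g u)).
by rewrite big_seq_pick ?undup_uniq // mem_undup map_f.
Qed.

Section NormSquare.
Variable R : realType.
Implicit Types (y z : R[i]).

Lemma normsq_ge0 y : 0 <= normsq y.
Proof. by rewrite /normsq addr_ge0 // sqr_ge0. Qed.

Lemma normsq_eq0 y : (normsq y == 0) = (y == 0).
Proof.
case: y => a b; rewrite /normsq /= paddr_eq0 ?sqr_ge0 // !sqrf_eq0.
by apply/andP/eqP => [[/eqP-> /eqP->]|[-> ->]].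
Qed.

(* Weighted parallelogram bound, i.e. |y + z|^2 <= (1 + b/a)|y|^2 + (1 + a/b)|z|^2
   with the denominators cleared. *)
Lemma normsq_addr_weighted (a b : R) y z :
  a * b * normsq (y + z) <= b * (a + b) * normsq y + a * (a + b) * normsq z.
Proof.
case: y => y1 y2; case: z => z1 z2; rewrite /normsq /=.
have := sqr_ge0 (b * y1 - a * z1); have := sqr_ge0 (b * y2 - a * z2).
nra.
Qed.

End NormSquare.

Section OperatorNorm.
Variables (R : realType) (d : nat).
Implicit Types (A B : fock_op R d) (s : seq (word d)) (x : word d -> R[i]).

Lemma sum_normsq_ge0 s x : 0 <= \sum_(u <- s) normsq (x u).
Proof. by apply: sumr_ge0 => u _; apply: normsq_ge0. Qed.

Lemma sum_normsq_le0 s x :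
  \sum_(u <- s) normsq (x u) <= 0 -> {in s, forall u, x u = 0}.
Proof.
move=> le0; have /eqP : \sum_(u <- s) normsq (x u) = 0.
  by apply/eqP; rewrite eq_le le0 sum_normsq_ge0.
rewrite psumr_eq0 => [/allP all0 u /all0|u _]; last exact: normsq_ge0.
by rewrite normsq_eq0 => /eqP.
Qed.

Lemma opnorm_ext A B c : A =2 B -> opnorm_le A c -> opnorm_le B c.
Proof.
move=> eqAB [c0 leA]; split => // s x us; apply: le_trans (leA s x us).
by under eq_bigr do under eq_bigr do rewrite -eqAB.
Qed.

Lemma opnorm_le_ge A a b : a <= b -> opnorm_le A a -> opnorm_le A b.
Proof.
move=> ab [a0 leA]; split => [|s x us]; first exact: le_trans ab.
apply: le_trans (leA s x us) _; rewrite ler_wpM2r ?sum_normsq_ge0 //.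
by rewrite ler_sqr ?nnegrE // (le_trans a0 ab).
Qed.

Lemma opnorm0 : opnorm_le (fun _ _ : word d => 0 : R[i]) 0.
Proof.
split => // s x _; rewrite expr0n mul0r big1 // => u _.
by rewrite big1 => [|w _]; rewrite ?mul0r // /normsq expr0n addr0.
Qed.

Lemma opnorm_le_local A c : 0 <= c ->
  (forall s, exists2 B, opnorm_le B c & {in s &, forall u w, A u w = B u w}) ->
  opnorm_le A c.
Proof.
move=> c0 local; split => // s x us; have [B [_ leB] eqAB] := local s.
rewrite (eq_big_seq (fun u => normsq (\sum_(w <- s) B u w * x w))) ?leB // => u su.
by congr normsq; apply: eq_big_seq => w sw; rewrite eqAB.
Qed.

Lemma opnorm_le0 A :
  opnorm_le A 0 -> forall s x, uniq s -> {in s, forall u, \sum_(w <- s) A u w * x w = 0}.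
Proof.
by move=> [_ leA] s x us; apply: sum_normsq_le0; rewrite (le_trans (leA s x us)) // expr0n mul0r.
Qed.

Lemma opnorm_add0l A B b :
  opnorm_le A 0 -> opnorm_le B b -> opnorm_le (fun u w => A u w + B u w) b.
Proof.
move=> A0 [b0 leB]; split => // s x us.
rewrite (eq_big_seq (fun u => normsq (\sum_(w <- s) B u w * x w))) ?leB // => u su.
by under eq_bigr do rewrite mulrDl; rewrite big_split /= (opnorm_le0 A0) ?add0r.
Qed.

Lemma opnorm_add_gt0 A B a b : 0 < a -> 0 < b ->
  opnorm_le A a -> opnorm_le B b -> opnorm_le (fun u w => A u w + B u w) (a + b).
Proof.
move=> a_gt0 b_gt0 [_ leA] [_ leB]; split => [|s x us]; first by rewrite addr_ge0 ?ltW.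
set y := fun u => \sum_(w <- s) A u w * x w; set z := fun u => \sum_(w <- s) B u w * x w.
under eq_bigr do under eq_bigr do rewrite mulrDl; under eq_bigr do rewrite big_split /=.
rewrite -(ler_pM2l (mulr_gt0 a_gt0 b_gt0)) mulr_sumr.
apply: le_trans (ler_sum _ (fun u _ => normsq_addr_weighted a b (y u) (z u))) _.
rewrite big_split /= -!mulr_sumr.
move: (leA s x us) (leB s x us) (sum_normsq_ge0 s x).
set X := \sum_(w <- s) normsq (x w).
set Y := \sum_(u <- s) normsq (y u); set Z := \sum_(u <- s) normsq (z u).
move=> leY leZ X0.
have ab0 : 0 < b * (a + b) by rewrite mulr_gt0 ?addr_gt0.
have ba0 : 0 < a * (a + b) by rewrite mulr_gt0 ?addr_gt0.
nra.
Qed.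

Lemma opnorm_add A B a b :
  opnorm_le A a -> opnorm_le B b -> opnorm_le (fun u w => A u w + B u w) (a + b).
Proof.
move=> leA leB; case: (leA) (leB) => a0 _ [b0 _].
have [a_eq0|a_neq0] := eqVneq a 0.
  by rewrite a_eq0 add0r in leA *; apply: opnorm_add0l.
have [b_eq0|b_neq0] := eqVneq b 0.
  rewrite b_eq0 addr0 in leB *.
  by apply: opnorm_ext (opnorm_add0l leB leA) => u w; rewrite addrC.
by apply: opnorm_add_gt0; rewrite // lt_def ?a_neq0 ?b_neq0.
Qed.

Lemma opnorm_sum (A : nat -> fock_op R d) (a : nat -> R) m n :
  (forall k, opnorm_le (A k) (a k)) ->
  opnorm_le (fun u w => \sum_(m <= k < n) A k u w) (\sum_(m <= k < n) a k).
Proof.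
move=> leA; elim: n => [|n IH].
  by rewrite big_geq //; apply: opnorm_ext opnorm0 => u w; rewrite big_geq.
have [mn|nm] := leqP m n; last first.
  by rewrite big_geq //; apply: opnorm_ext opnorm0 => u w; rewrite big_geq.
rewrite big_nat_recr //; apply: opnorm_ext (opnorm_add IH (leA n)) => u w.
by rewrite big_nat_recr.
Qed.

End OperatorNorm.

Lemma eq_take_drop (T : eqType) n (x y : seq T) :
  (take n x == take n y) && (drop n x == drop n y) = (x == y).
Proof.
apply/andP/eqP => [[/eqP ex /eqP ey]|-> //].
by rewrite -(cat_take_drop n x) ex ey cat_take_drop.
Qed.

Lemma size_take_eq (T : Type) n (x : seq T) : (size (take n x) == n) = (n <= size x)%N.
Proof.
case: leqP => small; first by rewrite size_takel ?eqxx.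
by rewrite take_oversize ?ltn_eqF // ltnW.
Qed.

Section Amplification.
Variables (R : realType) (d : nat).
Implicit Types (D : fock_op R d) (u w : word d).

(* On F_m, m >= n, this is (D|_{F_n}) (x) I, where F_m = F_n (x) (C^d)^{(x)(m-n)}. *)
Definition amplify n D : fock_op R d :=
  fun u w => D (take n u) (take n w) * (drop n u == drop n w)%:R.

Lemma amplify_amplify m n D : (m <= n)%N -> amplify n (amplify m D) =2 amplify m D.
Proof.
move=> mn u w; rewrite /amplify !take_takel // -mulrA -natrM mulnb.
by rewrite -(subnK mn) -!take_drop -!drop_drop eq_take_drop.
Qed.

Lemma amplify_small n D u w : (size u <= n)%N || (size w <= n)%N ->
  amplify n D u w = if (size u <= n)%N && (size w <= n)%N then D u w else 0.
Proof.
have drop_nil x : (drop n x == [::]) = (size x <= n)%N.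
  by rewrite -size_eq0 size_drop subn_eq0.
move=> small; rewrite /amplify.
have -> : (drop n u == drop n w) = (size u <= n)%N && (size w <= n)%N.
  case/orP: small => small.
    by rewrite [drop n u]drop_oversize // eq_sym drop_nil small.
  by rewrite [drop n w]drop_oversize // drop_nil small andbT.
case: ifP => [/andP[un wn]|_]; last by rewrite mulr0.
by rewrite !take_oversize // mulr1.
Qed.

Lemma amplify_id n D u w : size u = n -> size w = n -> amplify n D u w = D u w.
Proof. by move=> su sw; rewrite amplify_small su sw leqnn. Qed.

Lemma block_diagonal_amplify n D : block_diagonal D -> block_diagonal (amplify n D).
Proof.
move=> bD u w neq; rewrite /amplify; case: eqP => [eq_drop|_]; last by rewrite mulr0.
rewrite bD ?mul0r //; apply: contra neq => /eqP eq_take.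
by rewrite -(cat_take_drop n u) -(cat_take_drop n w) !size_cat eq_take eq_drop.
Qed.

Lemma block_diagonal_tensor_defect (T : fock_op R d) n : block_diagonal (tensor_defect T n).
Proof.
move=> u w; rewrite /tensor_defect.
by case: (size u =P n.+1) => // ->; case: (size w =P n.+1) => // ->; rewrite eqxx.
Qed.

Lemma amplify_tensor_defect (T : fock_op R d) k u w :
  amplify k.+1 (tensor_defect T k) u w =
  if (k < size u)%N && (k < size w)%N then amplify k.+1 T u w - amplify k T u w else 0.
Proof.
rewrite /amplify /tensor_defect !size_take_eq.
case: ifP => _; last by rewrite mul0r.
by rewrite mulrBl; congr (_ - _); apply: (amplify_amplify T (leqnSn k)).
Qed.

(* The basis of F splits into the blocks {v' ++ v : |v'| = n} indexed by the tail v,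
   and on each block amplify n D acts as D acting on the heads v'. *)
Lemma opnorm_amplify n D c : opnorm_le D c -> opnorm_le (amplify n D) c.
Proof.
move=> [c0 leD]; split => // s x us.
rewrite (big_partition _ (drop n)) [X in _ <= _ * X](big_partition _ (drop n)) mulr_sumr.
apply: ler_sum => v _.
set sv := [seq take n u | u <- s & drop n u == v].
have uniq_sv : uniq sv.
  rewrite map_inj_in_uniq ?filter_uniq // => u w.
  rewrite !mem_filter => /andP[/eqP du _] /andP[/eqP dw _] eq_take.
  by apply/eqP; rewrite -(eq_take_drop n) eq_take du dw !eqxx.
have x_block w : drop n w == v -> x (take n w ++ v) = x w.
  by move=> /eqP <-; rewrite cat_take_drop.
have := leD sv (fun v' => x (v' ++ v)) uniq_sv.
rewrite /sv !big_map !big_filter [X in _ * X](eq_bigr (fun w => normsq (x w))) => [|w /x_block -> //].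
apply: le_trans; rewrite le_eqVlt; apply/predU1l.
apply: eq_bigr => u /eqP du; congr normsq.
rewrite big_map big_filter [RHS]big_mkcond; apply: eq_bigr => w _.
rewrite /amplify du (eq_sym v); case: ifP => [dw|_]; last by rewrite mulr0 mul0r.
by rewrite mulr1 x_block.
Qed.

End Amplification.

Section Monomials.
Variable d : nat.
Implicit Types (a b w : word d) (m : seq (bool * 'I_d)).

Lemma monomial_act_cat m1 m2 w :
  monomial_act (m1 ++ m2) w = obind (monomial_act m1) (monomial_act m2 w).
Proof.
rewrite /monomial_act foldr_cat; case: (foldr _ _ m2) => [v|] //=.
by elim: m1 => //= x m1 ->.
Qed.

Definition LLstar a b : seq (bool * 'I_d) :=
  map (pair false) a ++ rev (map (pair true) b).

Lemma monomial_act_L a w : monomial_act (map (pair false) a) w = Some (a ++ w).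
Proof. by elim: a => //= j a ->. Qed.

Lemma monomial_act_Lstar b w :
  monomial_act (rev (map (pair true) b)) w =
  if take (size b) w == b then Some (drop (size b) w) else None.
Proof.
elim: b w => [|j b IH] w /=; first by rewrite take0 drop0 eqxx.
rewrite rev_cons -cats1 monomial_act_cat; case: w => [|i w] //=.
by rewrite /letter_act eqseq_cons; case: (eqVneq i j) => //= ->; rewrite IH.
Qed.

Lemma monomial_act_LLstar a b w :
  monomial_act (LLstar a b) w =
  if take (size b) w == b then Some (a ++ drop (size b) w) else None.
Proof.
by rewrite monomial_act_cat monomial_act_Lstar; case: ifP => //= _; rewrite monomial_act_L.
Qed.

Definition words n : seq (word d) := [seq tval t | t : n.-tuple 'I_d].

Lemma words_uniq n : uniq (words n).
Proof. by rewrite map_inj_uniq ?enum_uniq //; apply: val_inj. Qed.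

Lemma mem_words n w : (w \in words n) = (size w == n).
Proof.
apply/mapP/idP => [[t _ ->]|sw]; first by rewrite size_tuple.
by exists (Tuple sw); rewrite ?mem_enum.
Qed.

End Monomials.

Section StarPolynomials.
Variables (R : realType) (d : nat).
Implicit Types (p q : starpoly R d) (u w : word d).

Definition starpoly_opp p : starpoly R d := [seq (- t.1, t.2) | t <- p].

Lemma starpoly_op_opp p u w : starpoly_op (starpoly_opp p) u w = - starpoly_op p u w.
Proof. by rewrite /starpoly_op big_map -sumrN; apply: eq_bigr => t _; rewrite mulNr. Qed.

Lemma starpoly_op_cat p q u w :
  starpoly_op (p ++ q) u w = starpoly_op p u w + starpoly_op q u w.
Proof. by rewrite /starpoly_op big_cat. Qed.

Lemma starpoly_op_flatten (ps : seq (starpoly R d)) u w :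
  starpoly_op (flatten ps) u w = \sum_(p <- ps) starpoly_op p u w.
Proof.
elim: ps => [|p ps IH]; first by rewrite /starpoly_op !big_nil.
by rewrite /= starpoly_op_cat IH big_cons.
Qed.

Definition amplify_from n (D : fock_op R d) : fock_op R d :=
  fun u w => if (n <= size u)%N && (n <= size w)%N then amplify n D u w else 0.

Definition amplify_poly n (D : fock_op R d) : starpoly R d :=
  [seq (D a b, LLstar a b) | a <- words d n, b <- words d n].

Lemma starpoly_op_amplify_poly n D : starpoly_op (amplify_poly n D) =2 amplify_from n D.
Proof.
move=> u w; rewrite /starpoly_op big_allpairs_dep /=.
have term a b : a \in words d n -> b \in words d n ->
    D a b * (monomial_act (LLstar a b) w == Some u)%:R =
    if a == take n u then (if b == take n w then amplify n D u w else 0) else 0.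
  rewrite !mem_words => /eqP sa /eqP sb; rewrite monomial_act_LLstar sb (eq_sym b).
  case: (take n w =P b) => [<-|_] /=; last by rewrite mulr0; case: ifP.
  rewrite (inj_eq Some_inj) -(eq_take_drop n) take_size_cat ?drop_size_cat //.
  by case: (a =P take n u) => [->|_] /=; rewrite ?mulr0 // /amplify eq_sym.
rewrite (eq_big_seq (fun a => if a == take n u then
    \sum_(b <- words d n) (if b == take n w then amplify n D u w else 0) else 0)).
  by rewrite !big_seq_pick ?words_uniq // !mem_words !size_take_eq /amplify_from; case: ifP.
by move=> a sa; under eq_big_seq => b sb do rewrite term //; case: ifP => // _; rewrite big1.
Qed.

Lemma amplify_from_sub n D u w :
  amplify_from n D u w - amplify_from n.+1 (amplify n D) u w =
  if (size u == n) && (size w == n) then D u w else 0.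
Proof.
rewrite /amplify_from.
have [/andP[nu nw]|shallow] := boolP ((n < size u) && (n < size w))%N.
  by rewrite (ltnW nu) (ltnW nw) amplify_amplify // subrr (gtn_eqF nu).
rewrite subr0; move: shallow; rewrite negb_and -!leqNgt => shallow.
case: ifP => [/andP[nu nw]|deep]; first by rewrite amplify_small // !eqn_leq nu nw !andbT.
by case: ifP => // /andP[/eqP su /eqP sw]; rewrite su sw leqnn in deep.
Qed.
End StarPolynomials.

Section Approximation.
Variables (R : realType) (d : nat) (T : fock_op R d).
Implicit Types (u w : word d).

(* T|_{F_0} + ... + T|_{F_(N-1)} + (T|_{F_N}) (x) I on the levels m >= N;
   each diagonal block is the difference of two amplifications. *)
Definition approx_poly N : starpoly R d :=
  amplify_poly N T ++
  flatten [seq amplify_poly n T ++ starpoly_opp (amplify_poly n.+1 (amplify n T))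
          | n <- index_iota 0 N].

Lemma starpoly_op_approx_poly N u w :
  starpoly_op (approx_poly N) u w =
  amplify_from N T u w + \sum_(0 <= n < N) (if (size u == n) && (size w == n) then T u w else 0).
Proof.
rewrite starpoly_op_cat starpoly_op_flatten big_map starpoly_op_amplify_poly.
congr (_ + _); apply: eq_bigr => n _.
by rewrite starpoly_op_cat starpoly_op_opp !starpoly_op_amplify_poly amplify_from_sub.
Qed.

Hypothesis T_block_diagonal : block_diagonal T.

Lemma approx_poly_error N M u w : (size u < M)%N -> (size w < M)%N ->
  T u w - starpoly_op (approx_poly N) u w =
  \sum_(N <= k < M) amplify k.+1 (tensor_defect T k) u w.
Proof.
move=> uM wM; rewrite starpoly_op_approx_poly.
have [suw|neq] := eqVneq (size u) (size w); last first.
  rewrite [RHS]big1 => [|k _]; last exact: block_diagonal_amplify (block_diagonal_tensor_defect T k) _ _ neq.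
  rewrite T_block_diagonal // /amplify_from block_diagonal_amplify // if_same.
  rewrite big1 ?addr0 ?subrr // => n _.
  by case: ifP => // /andP[/eqP su /eqP sw]; rewrite su sw eqxx in neq.
rewrite /amplify_from -suw andbb; under eq_bigr do rewrite andbb eq_sym.
rewrite big_seq_pick ?iota_uniq // mem_index_iota /=.
have [mN|Nm] := ltnP (size u) N.
  rewrite add0r subrr big1_seq // => k; rewrite mem_index_iota => /andP[_ /andP[Nk _]].
  by rewrite amplify_tensor_defect -suw andbb ltnNge (leq_trans (ltnW mN) Nk).
rewrite addr0 (big_cat_nat Nm (ltnW uM)) /= [X in _ = _ + X]big1_seq ?addr0; last first.
  move=> k; rewrite mem_index_iota => /andP[_ /andP[mk _]].
  by rewrite amplify_tensor_defect -suw andbb ltnNge mk.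
rewrite (telescope_sumr_eq (fun k => amplify k T u w)) //; last first.
  by move=> k /andP[_ km]; rewrite amplify_tensor_defect -suw andbb km.
by rewrite [amplify (size u) _ _ _]amplify_id.
Qed.

End Approximation.

Lemma bounded_series_tail (R : realType) (c : nat -> R) (B : R) :
  (forall n, 0 <= c n) -> (forall N, \sum_(1 <= n < N) c n <= B) ->
  forall eps, 0 < eps -> exists N, forall M, \sum_(N <= k < M) c k <= eps.
Proof.
move=> c_ge0 sumB eps eps_gt0.
pose P K := \sum_(1 <= n < K) c n.
have P_sup : has_sup (range P)%classic.
  by split; [exists (P 0%N), 0%N | exists B => _ [K _ <-]; apply: sumB].
have [_ [N _ <-] near_sup] := sup_adherent eps_gt0 P_sup.
have P_le_sup M : P M <= sup (range P)%classic.
  by apply: sup_upper_bound => //; exists M.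
have PN_le : P N <= P N.+1.
  case: N {near_sup} => [|N]; first by rewrite /P !big_geq.
  by rewrite /P (big_nat_recr N.+1) //= lerDl.
exists N.+1 => M; have [MN|NM] := leqP M N.+1; first by rewrite big_geq // ltW.
have := P_le_sup M; rewrite /P (big_cat_nat (n := N.+1)) ?(ltnW NM) //= -/(P N.+1).
lra.
Qed.

Theorem lemma3p4 (R : realType) (d : nat) (hd : (2 <= d)%N) (T : fock_op R d) :
  bounded_op T ->
  block_diagonal T ->
  (exists c : nat -> R,
      (forall n : nat, opnorm_le (tensor_defect T n) (c n)) /\
      (exists B : R, forall N : nat, \sum_(1 <= n < N) c n <= B)) ->
  in_Cuntz_Toeplitz T.
Proof.
move=> _ T_block_diagonal [c [defect_le [B sumB]]] eps eps_gt0.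
have c_ge0 n : 0 <= c n by case: (defect_le n).
have [N tail_le] := bounded_series_tail c_ge0 sumB eps_gt0.
exists (approx_poly T N); apply: opnorm_le_local (ltW eps_gt0) _ => s.
pose M := (\max_(u <- s) size u).+1.
have size_lt u : u \in s -> (size u < M)%N by move=> su; rewrite ltnS leq_bigmax_seq.
exists (fun u w => \sum_(N <= k < M) amplify k.+1 (tensor_defect T k) u w).
  exact: opnorm_le_ge (tail_le M) (opnorm_sum N M (fun k => opnorm_amplify k.+1 (defect_le k))).
by move=> u w su sw; rewrite (approx_poly_error T_block_diagonal N (size_lt u su) (size_lt w sw)).
Qed.
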